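(* Elements of $\mathcal{C}_2$ cannot in general be reparametrized to elements of $\mathcal{C}_1$: there exist an input space $\mathcal{X}$ with associated graphs, a label set $\mathcal{L}$, fixed unary and pairwise features, and a weight vector $w_1\in\mathcal{C}_2$ such that no $w_2\in\mathcal{C}_1$ is a reparametrization of $w_1$, i.e. for every $w_2\in\mathcal{C}_1$ there is some $x\in\mathcal{X}$ with $\arg\max_{y\in\mathcal{Y}} w_1^\top\psi(x,y)\neq \arg\max_{y\in\mathcal{Y}} w_2^\top\psi(x,y)$.
   Context: Pairwise CRF model. Each input $x\in\mathcal{X}$ comes with a finite graph with vertices $\mathcal{V}_x=(x^k)_k$ and undirected edges $\mathcal{E}_x$. An output $y\in\mathcal{Y}$ is a labeling $(y^k)_k\in\mathcal{L}^{|\mathcal{V}_x|}$ with a finite label set $\mathcal{L}$. Unary features $\phi_u(x^k)\in\mathbb{R}^{d_u}$ and pairwise features $\phi_p(x^k,x^l)\in\mathbb{R}^{d_p}$ are fixed. The weight vector $w$ consists of unary weights $w_\alpha\in\mathbb{R}^{d_u}$ for each $\alpha\in\mathcal{L}$ and pairwise weights $w_{\alpha\beta}\in\mathbb{R}^{d_p}$ for each $(\alpha,\beta)\in\mathcal{L}^2$. The score is $w^\top\psi(x,y)=\sum_{x^k\in\mathcal{V}_x}\langle w_{y^k},\phi_u(x^k)\rangle+\sum_{\{x^k,x^l\}\in\mathcal{E}_x}\langle w_{y^ky^l},\phi_p(x^k,x^l)\rangle$ (equivalently, $\psi$ is built from Kronecker products of one-hot label encodings with the features). Constraint sets: $\mathcal{C}_1=\{w: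 w_{\alpha\alpha}=w_{\beta\beta}=0,\ w_{\alpha\beta}\le 0,\ w_{\beta\alpha}\le 0 \text{ (componentwise) for all } \alpha\neq\beta\in\mathcal{L}\}$ and $\mathcal{C}_2=\{w: w_{\alpha\alpha}\ge 0,\ w_{\beta\beta}\ge 0,\ w_{\alpha\beta}\le 0,\ w_{\beta\alpha}\le 0 \text{ (componentwise) for all } \alpha\neq\beta\in\mathcal{L}\}$. A weight vector $w_1$ is reparametrizable into $w_2$ if $\arg\max_{y\in\mathcal{Y}} w_1^\top\psi(x,y)=\arg\max_{y\in\mathcal{Y}} w_2^\top\psi(x,y)$ for all $x\in\mathcal{X}$; the features are held fixed and only the weights change. *)

From HB Require Import structures.
From mathcomp Require Import all_boot all_order all_algebra.
From mathcomp Require Import Rstruct.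
Notation R := Rdefinitions.R.
Set Implicit Arguments. Unset Strict Implicit. Unset Printing Implicit Defensive.
Import Order.TTheory GRing.Theory Num.Theory.
Local Open Scope ring_scope.

(* A pairwise CRF model: input space X, per-input finite graph with vertices
   'I_(nv x) and undirected edges (stored once, oriented as (k,l) with k < l),
   a finite label set L, fixed unary features in R^du and pairwise features
   in R^dp. *)
Record crf_model := CRFModel {
  X : Type;
  nv : X -> nat;
  edges : forall x : X, {set 'I_(nv x) * 'I_(nv x)};
  edges_ok : forall (x : X) (e : 'I_(nv x) * 'I_(nv x)),
      e \in edges x -> (nat_of_ord e.1 < nat_of_ord e.2)%N;
  L : finType;
  du : nat;
  dp : nat;
  phi_u : forall x : X, 'I_(nv x) -> 'I_du -> R;
  phi_p : forall x : X, 'I_(nv x) -> 'I_(nv x) -> 'I_dp -> R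
}.

Record weight (M : crf_model) := Weight {
  w_u : L M -> 'I_(du M) -> R;
  w_p : L M -> L M -> 'I_(dp M) -> R
}.

Definition dotv (d : nat) (a b : 'I_d -> R) : R := \sum_(i < d) a i * b i.

Definition labeling (M : crf_model) (x : X M) := {ffun 'I_(nv x) -> L M}.

(* The score w^T psi(x,y). *)
Definition score (M : crf_model) (w : weight M) (x : X M) (y : labeling x) : R :=
  \sum_(k < nv x) dotv (w_u w (y k)) (phi_u k)
  + \sum_(e in edges x) dotv (w_p w (y e.1) (y e.2)) (phi_p e.1 e.2).

Definition argmax (M : crf_model) (w : weight M) (x : X M) : {set labeling x} :=
  [set y | [forall y' : labeling x, score w y' <= score w y]].

Definition reparametrizable (M : crf_model) (w1 w2 : weight M) : Prop :=
  forall x : X M, argmax w1 x = argmax w2 x.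

Definition inC1 (M : crf_model) (w : weight M) : Prop :=
  (forall (a : L M) (i : 'I_(dp M)), w_p w a a i = 0) /\
  (forall (a b : L M) (i : 'I_(dp M)), a != b -> w_p w a b i <= 0).

Definition inC2 (M : crf_model) (w : weight M) : Prop :=
  (forall (a : L M) (i : 'I_(dp M)), 0 <= w_p w a a i) /\
  (forall (a b : L M) (i : 'I_(dp M)), a != b -> w_p w a b i <= 0).

(** Take a single edge between two vertices, boolean labels, no unary
    features and the constant pairwise feature 1, and let [w1] reward only the
    label pair (true, true); [w1] lies in C2 and its argmax is the all-true
    labeling alone.  A weight in C1 has zero diagonal pairwise weights, so it
    gives the all-true and the all-false labelings the same score, and its
    argmax contains either both of them or neither. *)
From mathcomp Require Import all_boot all_order all_algebra.
From mathcomp Require Import Rstruct.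
Import Order.TTheory GRing.Theory Num.Theory.
Local Open Scope ring_scope.

Lemma dotv0 (a b : 'I_0 -> R) : dotv a b = 0.
Proof. by rewrite /dotv big_ord0. Qed.

Lemma in_argmax (M : crf_model) (w : weight M) (x : X M) (y : labeling x) :
  (y \in argmax w x) = [forall y' : labeling x, score w y' <= score w y].
Proof. by rewrite inE. Qed.

Lemma argmax_eq_score (M : crf_model) (w : weight M) (x : X M) (y1 y2 : labeling x) :
  score w y1 = score w y2 -> (y1 \in argmax w x) = (y2 \in argmax w x).
Proof. by move=> eq_y12; rewrite !in_argmax eq_y12. Qed.

Lemma score_const_inC1 (M : crf_model) (w : weight M) (x : X M) (a : L M) :
  inC1 w ->
  score w ([ffun=> a] : labeling x) = \sum_(k < nv x) dotv (w_u w a) (phi_u k).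
Proof.
move=> [w_diag0 _]; rewrite /score [X in _ + X]big1 ?addr0 => [|e _].
  by apply: eq_bigr => k _; rewrite ffunE.
by rewrite !ffunE /dotv big1 // => i _; rewrite w_diag0 mul0r.
Qed.

Definition single_edge (_ : unit) : {set 'I_2 * 'I_2} := [set (ord0, ord_max)].

Lemma single_edge_ok (x : unit) (e : 'I_2 * 'I_2) :
  e \in single_edge x -> (nat_of_ord e.1 < nat_of_ord e.2)%N.
Proof. by rewrite inE => /eqP ->. Qed.

Definition edge_model : crf_model :=
  @CRFModel unit (fun=> 2%N) single_edge single_edge_ok bool 0%N 1%N
    (fun _ _ _ => 0) (fun _ _ _ _ => 1).

Lemma score_edge_model (w : weight edge_model) (y : labeling (M:=edge_model) tt) :
  score w y = w_p w (y ord0) (y ord_max) ord0.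
Proof.
rewrite /score big1 ?add0r => [|k _]; last exact: dotv0.
by rewrite big_set1 /dotv big_ord1 mulr1.
Qed.

Definition w_and : weight edge_model :=
  @Weight edge_model (fun _ _ => 0) (fun a b _ => (a && b)%:R).

Lemma w_and_inC2 : inC2 w_and.
Proof. by split=> [a i | [] [] i] //=; rewrite ler0n. Qed.

Definition const_labeling (a : bool) : labeling (M:=edge_model) tt := [ffun=> a].

Lemma argmax_w_and :
  (const_labeling true \in argmax w_and tt) &&
  (const_labeling false \notin argmax w_and tt).
Proof.
rewrite !in_argmax negb_forall; apply/andP; split.
  apply/forallP=> y; rewrite !score_edge_model !ffunE /=.
  by case: (y ord0 && y ord_max); rewrite ler_nat.
by apply/existsP; exists (const_labeling true); rewrite !score_edge_model !ffunE -ltNge ltr01.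
Qed.

Lemma argmax_inC1_edge_model {w : weight edge_model} : inC1 w ->
  (const_labeling true \in argmax w tt) = (const_labeling false \in argmax w tt).
Proof.
move=> w_inC1; apply: argmax_eq_score.
by rewrite !score_const_inC1 // !big1 // => k _; apply: dotv0.
Qed.

Theorem proposition1 :
  exists (M : crf_model) (w1 : weight M),
    inC2 w1 /\
    forall w2 : weight M, inC1 w2 ->
      exists x : X M, argmax w1 x <> argmax w2 x.
Proof.
exists edge_model, w_and; split; first exact: w_and_inC2.
move=> w2 w2_inC1; exists tt => eq_argmax.
have /andP[true_in false_notin] := argmax_w_and.
have := argmax_inC1_edge_model w2_inC1.
by rewrite -eq_argmax true_in (negbTE false_notin).
Qed.
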